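(* Let $A=\{a_n\}_{n\in\mathbb Z}\subset\mathbb R$ be an almost periodic set (multiplicities counted). Then there is $k_2\in\mathbb N$ such that for every $h>0$ and all $x_1,x_2\in\mathbb R$, $$\big|\#(A\cap[x_1,x_1+h))-\#(A\cap[x_2,x_2+h))\big|\le k_2,$$ and for every $x\in\mathbb R$, $h>0$, $M\in\mathbb N$, $$\Big|\#(A\cap[x,x+h))-\tfrac1M\,\#(A\cap[x,x+Mh))\Big|\le k_2.$$
   Context: A discrete locally finite multiset $A=\{a_n\}_{n\in\mathbb Z}\subset\mathbb R$ (a point may occur several times in the sequence) is called almost periodic if for every $\varepsilon>0$ the set of $\varepsilon$-almost periods $$E_\varepsilon=\{\tau\in\mathbb R:\ \exists\text{ a bijection }\sigma:\mathbb Z\to\mathbb Z\text{ with }\sup_n|a_n+\tau-a_{\sigma(n)}|<\varepsilon\}$$ is relatively dense, i.e. there is $L_\varepsilon>0$ such that $E_\varepsilon\cap(x,x+L_\varepsilon)\neq\emptyset$ for every $x\in\mathbb R$. For a set $H\subset\mathbb R$, $\#(A\cap H)$ denotes the number of indices $n$ with $a_n\in H$ (points counted with multiplicity). *)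

From HB Require Import structures.
From mathcomp Require Import all_boot all_order all_algebra.
From mathcomp Require Import finmap.
From mathcomp Require Import all_classical all_reals.
Set Implicit Arguments. Unset Strict Implicit. Unset Printing Implicit Defensive.
Import Order.TTheory GRing.Theory Num.Theory.
Local Open Scope classical_set_scope.
Local Open Scope ring_scope.

(* A multiset A = {a_n}_{n in Z} is given by the sequence a : int -> R. *)

Definition locally_finite (R : realType) (a : int -> R) : Prop :=
  forall x y : R, finite_set [set n : int | x <= a n <= y].

Definition count_in (R : realType) (a : int -> R) (x h : R) : nat :=
  (#|` fset_set [set n : int | (x <= a n < x + h)%R] |)%fset.

Definition almost_period (R : realType) (a : int -> R) (eps tau : R) : Prop :=
  exists sigma : int -> int, bijective sigma /\
    exists2 d : R, d < eps & forall n : int, `|a n + tau - a (sigma n)| <= d.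

Definition almost_periodic (R : realType) (a : int -> R) : Prop :=
  locally_finite a /\
  forall eps : R, 0 < eps ->
    exists2 L : R, 0 < L &
      forall x : R, exists tau : R, x < tau < x + L /\ almost_period a eps tau.

(** A 1-almost period [tau] comes with a bijection of [int] moving each
    [a n] by [tau] up to an error below 1, so it injects the points of [A] in
    an interval [I] into the points of [A] in the 1-neighbourhood of [I + tau].
    Since 1-almost periods occur in every interval of length [L], a suitable
    [tau] injects [A ∩ [x1, x1 + h)] into [A ∩ [x2 - 1, x2 + h + L + 1]], that
    is into [A ∩ [x2, x2 + h)] plus two closed windows of length [L + 1]; and
    another one injects every closed window of length [L + 1] into the fixed
    interval [[-1, 2L + 2]].  So counts over windows of equal length differ by
    at most twice the count of that interval.  The second inequality follows
    by cutting [[x, x + M h)] into [M] consecutive windows of length [h]. *)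
From HB Require Import structures.
From mathcomp Require Import all_boot all_order all_algebra.
From mathcomp Require Import finmap.
From mathcomp Require Import all_classical all_reals.
From mathcomp Require Import ring lra.
Import Order.TTheory GRing.Theory Num.Theory.
Local Open Scope classical_set_scope.
Local Open Scope ring_scope.
Set Implicit Arguments. Unset Strict Implicit.

Definition fcard (T : choiceType) (P : set T) : nat := (#|` fset_set P|)%fset.

Section FiniteCardinal.
Variable T : choiceType.
Implicit Types P Q : set T.

Lemma fcard_le_sub P Q : finite_set Q -> P `<=` Q -> (fcard P <= fcard Q)%N.
Proof.
move=> fQ PQ; have fP := sub_finite_set PQ fQ.
by apply: fsubset_leq_card; rewrite -fset_set_sub.
Qed.

Lemma fcard_le_inj P Q (f : T -> T) : finite_set P -> finite_set Q ->
  injective f -> (forall t, P t -> Q (f t)) -> (fcard P <= fcard Q)%N.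
Proof.
move=> fP fQ f_inj PQ.
have -> : fcard P = fcard (f @` P) by rewrite /fcard fset_set_image // card_imfset.
by apply: fcard_le_sub => // _ [t Pt <-]; exact: PQ.
Qed.

Lemma fcard_setU_le P Q : finite_set P -> finite_set Q ->
  (fcard (P `|` Q) <= fcard P + fcard Q)%N.
Proof. by move=> fP fQ; rewrite /fcard fset_setU //; exact: leq_card_fsetU. Qed.

Lemma fcard_setU_disjoint P Q : finite_set P -> finite_set Q ->
  P `&` Q = set0 -> fcard (P `|` Q) = (fcard P + fcard Q)%N.
Proof.
move=> fP fQ PQ0; rewrite /fcard fset_setU //.
have := cardfsUI (fset_set P) (fset_set Q).
by rewrite -fset_setI // PQ0 fset_set0 cardfs0 addn0.
Qed.

End FiniteCardinal.

Lemma ler_dist_nat (R : realDomainType) (p q k : nat) :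
  (p <= q + k)%N -> (q <= p + k)%N -> `|p%:R - q%:R| <= k%:R :> R.
Proof.
rewrite -(ler_nat R) -[(q <= _)%N](ler_nat R) !natrD => pqk qpk.
by rewrite ler_distl lerBlDr pqk qpk.
Qed.

Section Counting.
Variables (R : realType) (a : int -> R).
Hypothesis a_lf : locally_finite a.

Lemma count_inE (x h : R) : count_in a x h = fcard [set n | x <= a n < x + h].
Proof. by []. Qed.

Lemma finite_count_in_set (x h : R) : finite_set [set n | x <= a n < x + h].
Proof. by apply: sub_finite_set (a_lf x (x + h)) => n /= /andP[-> /ltW ->]. Qed.

Lemma count_in0 (x : R) : count_in a x 0 = 0%N.
Proof.
rewrite count_inE (_ : [set n | _] = set0); first by rewrite /fcard fset_set0.
by apply/seteqP; split => n //= /andP[]; lra.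
Qed.

Lemma count_inD (x h1 h2 : R) : 0 <= h1 -> 0 <= h2 ->
  count_in a x (h1 + h2) = (count_in a x h1 + count_in a (x + h1) h2)%N.
Proof.
move=> h1_ge0 h2_ge0; rewrite !count_inE addrA.
rewrite -(fcard_setU_disjoint (finite_count_in_set _ _) (finite_count_in_set _ _)).
  2: by apply/seteqP; split => n //= [/andP[_ ?] /andP[? _]]; lra.
congr fcard; apply/seteqP; split => n /=.
  move=> /andP[? ?]; have [?|?] := ltP (a n) (x + h1).
    by left; apply/andP; split; lra.
  by right; apply/andP; split; lra.
by case=> /andP[? ?]; apply/andP; split; lra.
Qed.

Lemma almost_period_fcard_le (tau : R) (P : set int) (u v : R) :
  almost_period a 1 tau -> finite_set P ->
  (forall n, P n -> u <= a n + tau - 1 /\ a n + tau + 1 <= v) ->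
  (fcard P <= fcard [set m | (u <= a m <= v)%R])%N.
Proof.
move=> [s [s_bij [d d_lt1 s_near]]] fP P_in.
apply: (fcard_le_inj (f := s)) => //; first exact: bij_inj.
move=> n /P_in[lo hi]; have := s_near n; rewrite ler_norml => /andP[? ?].
by apply/andP; split; lra.
Qed.

Variable L : R.
Hypothesis rel_dense : forall x : R,
  exists tau : R, x < tau < x + L /\ almost_period a 1 tau.

Let L_gt0 : 0 < L.
Proof. by have [tau [/andP[? ?] _]] := rel_dense 0; lra. Qed.

Let N := fcard [set m | -1 <= a m <= L + (L + 1) + 1].

Definition shift_bound : nat := (2 * N)%N.

Lemma fcard_closed_window_le (y : R) :
  (fcard [set n | (y <= a n <= y + (L + 1))%R] <= N)%N.
Proof.
have [tau [/andP[? ?] ap]] := rel_dense (- y).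
by apply: almost_period_fcard_le ap (a_lf _ _) _ => n /andP[? ?]; split; lra.
Qed.

Lemma fcard_enlarged_window_le (x h : R) :
  (fcard [set m | (x - 1 <= a m <= x + h + L + 1)%R]
    <= count_in a x h + shift_bound)%N.
Proof.
set B1 := [set n | x - 1 <= a n <= x - 1 + (L + 1)].
set B2 := [set n | x + h <= a n <= x + h + (L + 1)].
have fB1 : finite_set B1 by exact: a_lf.
have fB2 : finite_set B2 by exact: a_lf.
have fI := finite_count_in_set x h.
apply: (@leq_trans (fcard ([set n | x <= a n < x + h] `|` B1 `|` B2))).
  apply: fcard_le_sub; first by rewrite !finite_setU.
  move=> m /andP[lo hi]; have L0 := L_gt0; have [?|?] := ltP (a m) x.
    by left; right; apply/andP; split; lra.
  have [?|?] := ltP (a m) (x + h); first by left; left; apply/andP.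
  by right; apply/andP; split; lra.
rewrite /shift_bound mul2n -addnn addnA.
apply: leq_trans (fcard_setU_le _ _) _ => //; first by rewrite finite_setU.
rewrite leq_add ?fcard_closed_window_le //.
apply: leq_trans (fcard_setU_le _ _) _ => //.
by rewrite leq_add ?fcard_closed_window_le.
Qed.

Lemma count_in_le_shift (h x1 x2 : R) :
  (count_in a x1 h <= count_in a x2 h + shift_bound)%N.
Proof.
have [tau [/andP[? ?] ap]] := rel_dense (x2 - x1).
apply: leq_trans (fcard_enlarged_window_le x2 h).
apply: almost_period_fcard_le ap (finite_count_in_set _ _) _ => n /andP[? ?].
by split; lra.
Qed.

Lemma count_in_dist (h x1 x2 : R) :
  `|(count_in a x1 h)%:R - (count_in a x2 h)%:R| <= shift_bound%:R :> R.
Proof. by apply: ler_dist_nat; exact: count_in_le_shift. Qed.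

Lemma count_in_mul_dist (x h : R) (m : nat) : 0 <= h ->
  `|m%:R * (count_in a x h)%:R - (count_in a x (m%:R * h))%:R|
    <= m%:R * shift_bound%:R :> R.
Proof.
move=> h_ge0; elim: m => [|m IH]; first by rewrite !mul0r count_in0 subrr normr0.
rewrite -addn1 natrD !mulrDl !mul1r count_inD ?mulr_ge0 // natrD.
set u := (count_in a x h)%:R; set v := (count_in a x _)%:R.
rewrite (_ : _ + u - _ = (m%:R * u - v) + (u - (count_in a (x + m%:R * h) h)%:R)).
  by apply: le_trans (ler_normD _ _) _; rewrite lerD ?count_in_dist.
by ring.
Qed.

End Counting.

Theorem proposition2 (R : realType) (a : int -> R) :
  almost_periodic a ->
  exists k2 : nat,
    (forall (h x1 x2 : R), 0 < h ->
       `| (count_in a x1 h)%:R - (count_in a x2 h)%:R | <= k2%:R :> R) /\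
    (forall (x h : R) (M : nat), 0 < h -> (0 < M)%N ->
       `| (count_in a x h)%:R - (count_in a x (M%:R * h))%:R / M%:R | <= k2%:R :> R).
Proof.
move=> [a_lf ap]; have [L _ rel_dense] := ap 1 ltr01.
exists (shift_bound a L); split => [h x1 x2 _|x h M h_gt0 M_gt0].
  exact: (count_in_dist a_lf rel_dense).
have M_gt0R : 0 < M%:R :> R by rewrite ltr0n.
rewrite -(ler_pM2l M_gt0R) -{1}(gtr0_norm M_gt0R) -normrM.
rewrite mulrBr mulrCA divff ?mulr1 ?gt_eqF //.
exact: (count_in_mul_dist a_lf rel_dense x M (ltW h_gt0)).
Qed.
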